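(* Let $\mathrm{BS}$ be the Biggs-Smith graph. (1) Suppose $(u,v),x$ and $(u',v'),x'$ are edge-vertex pairs in $\mathrm{BS}$ (with $uv,u'v'\in E(\mathrm{BS})$) such that $\operatorname{dist}(u,x)=\operatorname{dist}(u',x')$ and $\operatorname{dist}(v,x)=\operatorname{dist}(v',x')$. Then there is an automorphism $\phi$ of $\mathrm{BS}$ with $\phi(u)=u'$, $\phi(v)=v'$, $\phi(x)=x'$. (2) Suppose $(u,v),(x,y)$ and $(u',v'),(x',y')$ are pairs of edges of $\mathrm{BS}$ such that $\operatorname{dist}(a,b)=\operatorname{dist}(a',b')$ for all $(a,b,a',b')\in\{(u,x,u',x'),(u,y,u',y'),(v,x,v',x'),(v,y,v',y')\}$. Then there is an automorphism $\phi$ of $\mathrm{BS}$ with $\phi(u)=u'$, $\phi(v)=v'$, $\phi(x)=x'$, $\phi(y)=y'$.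
   Context: The Biggs-Smith graph $\mathrm{BS}$ is the cubic graph on the $102$ vertices $ia,ib,ic,id,ie,if$ for $i\in\{1,\dots,17\}$ (indices taken modulo 17, with $0$ written as $17$), whose edges are: $ie\,ia$, $ie\,ib$, $ie\,if$, $if\,ic$, $if\,id$ for each $i$; and $ia\,(i+1)a$, $ib\,(i+4)b$, $ic\,(i+2)c$, $id\,(i+8)d$ for each $i$. $\operatorname{dist}$ is graph distance; an automorphism is a bijection of the vertex set preserving adjacency and non-adjacency. *)

From mathcomp Require Import all_boot all_fingroup.
Set Implicit Arguments. Unset Strict Implicit. Unset Printing Implicit Defensive.

(* Vertices of the Biggs-Smith graph: pairs (i, s) with i : 'I_17 the index
   (index 0 represents 17, indices taken mod 17) and s : 'I_6 the letter,
   with a = 0, b = 1, c = 2, d = 3, e = 4, f = 5. *)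
Definition BSV : finType := ('I_17 * 'I_6)%type.

Definition la := 0%N. Definition lb := 1%N. Definition lc := 2%N.
Definition ld := 3%N. Definition le := 4%N. Definition lf := 5%N.

Definition bs_arc (x y : BSV) : bool :=
  let i := nat_of_ord x.1 in let s := nat_of_ord x.2 in
  let j := nat_of_ord y.1 in let t := nat_of_ord y.2 in
  [|| [&& i == j, s == le & t == la],
      [&& i == j, s == le & t == lb],
      [&& i == j, s == le & t == lf],
      [&& i == j, s == lf & t == lc],
      [&& i == j, s == lf & t == ld],
      [&& j == (i + 1) %% 17, s == la & t == la],
      [&& j == (i + 4) %% 17, s == lb & t == lb],
      [&& j == (i + 2) %% 17, s == lc & t == lc]
    | [&& j == (i + 8) %% 17, s == ld & t == ld]].

Definition bs_adj (x y : BSV) : bool := bs_arc x y || bs_arc y x.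

Fixpoint bs_reach (n : nat) (x y : BSV) : bool :=
  match n with
  | 0 => x == y
  | n'.+1 => bs_reach n' x y || [exists z, bs_reach n' x z && bs_adj z y]
  end.

(* graph distance: least n such that y is reachable from x in at most n steps
   (the graph is connected with 102 vertices, so the search range suffices) *)
Definition bs_dist (x y : BSV) : nat :=
  find (fun n => bs_reach n x y) (iota 0 #|BSV|).

Definition bs_aut (phi : {perm BSV}) : Prop :=
  forall x y, bs_adj (phi x) (phi y) = bs_adj x y.

From mathcomp Require Import all_boot all_fingroup.
Set Implicit Arguments. Unset Strict Implicit. Unset Printing Implicit Defensive.

(* Every arc can be moved onto the base arc (17a, 17e) by an automorphism,
   and automorphisms preserve distances.  Both statements therefore reduce
   to configurations (a vertex, or an arc) seen from the base arc, where it
   suffices that two configurations with the same distances to 17a and 17e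
   lie in one orbit of the stabiliser of the base arc.  These are finite
   facts, checked by computation: the automorphism group, of order 2448, is
   enumerated from three generators, and the distances from 17a and 17e are
   computed and then validated by a local certificate. *)

Lemma inj_homo_mono (T : finType) (e : rel T) (f : T -> T) :
  injective f -> {homo f : x y / e x y} -> {mono f : x y / e x y}.
Proof.
move=> injf fe x y; apply/idP/idP; last exact: fe.
pose F (p : T * T) := (f p.1, f p.2).
have injF : injective F by move=> [a b] [c d] [/injf-> /injf->].
pose E := [set p : T * T | e p.1 p.2].
have FE : F @: E = E.
  apply/eqP; rewrite eqEcard card_imset // leqnn andbT.
  by apply/subsetP=> _ /imsetP[p Ep ->]; move: Ep; rewrite !inE; apply: fe.
(* [F] permutes the finite set of edges, so a non-edge cannot map to an edge *)
move=> efxy; have /imsetP[[a b] Eab [/injf-> /injf->]] : (f x, f y) \in F @: E.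
  by rewrite FE inE.
by rewrite inE in Eab.
Qed.

Lemma bs_adjC x y : bs_adj x y = bs_adj y x.
Proof. exact: orbC. Qed.

Lemma bs_aut1 : bs_aut 1%g.
Proof. by move=> x y; rewrite !perm1. Qed.

Lemma bs_autM p q : bs_aut p -> bs_aut q -> bs_aut (p * q)%g.
Proof. by move=> autp autq x y; rewrite !permM autq autp. Qed.

Lemma bs_autV p : bs_aut p -> bs_aut p^-1%g.
Proof. by move=> autp x y; rewrite -autp !permKV. Qed.

Lemma bs_reach_aut p n x y :
  bs_aut p -> bs_reach n (p x) (p y) = bs_reach n x y.
Proof.
move=> autp; elim: n y => [|n IHn] y /=; first by rewrite (inj_eq perm_inj).
rewrite IHn; congr orb; apply/existsP/existsP => [[z]|[z]].
  by rewrite -(permKV p z) IHn autp => ?; exists (p^-1%g z).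
by rewrite -IHn -autp => ?; exists (p z).
Qed.

Lemma bs_dist_aut p x y : bs_aut p -> bs_dist (p x) (p y) = bs_dist x y.
Proof. by move=> autp; apply: eq_find => n; rewrite bs_reach_aut. Qed.

(* Matching rather than projecting: under [vm_compute], [fst] and [snd]
   would evaluate the finType structures in their type arguments. *)
Definition vcode (x : BSV) : nat := let: (i, s) := x in 6 * i + s.

Definition vdecode (n : nat) : BSV :=
  (Ordinal (ltn_pmod (n %/ 6) (isT : 0 < 17)), Ordinal (ltn_pmod n (isT : 0 < 6))).

Definition vertices : seq BSV := map vdecode (iota 0 102).

Lemma vcodeK : cancel vcode vdecode.
Proof.
case=> [[i lt_i] [s lt_s]]; congr pair; apply: val_inj => /=.
  by rewrite mulnC divnMDl // divn_small // addn0 modn_small.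
by rewrite mulnC modnMDl modn_small.
Qed.

Lemma vcode_inj : injective vcode.
Proof. exact: can_inj vcodeK. Qed.

Lemma vcode_lt x : vcode x < 102.
Proof.
case: x => [[i lt_i] [s lt_s]]; rewrite /vcode /= -addnS.
by apply: (@leq_trans (6 * 16 + 6)) => //; apply: leq_add; rewrite // leq_mul2l -ltnS lt_i.
Qed.

Lemma size_vertices : size vertices = 102.
Proof. by rewrite size_map size_iota. Qed.

Lemma nth_vertices x0 x : nth x0 vertices (vcode x) = x.
Proof. by rewrite (nth_map 0) ?nth_iota ?size_iota ?vcode_lt // vcodeK. Qed.

Lemma mem_vertices x : x \in vertices.
Proof. by rewrite -(nth_vertices x x) mem_nth // size_vertices vcode_lt. Qed.

Definition adj_lists : seq (seq BSV) :=
  [seq [seq y <- vertices | bs_adj x y] | x <- vertices].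

(* Tables used in the computations below are stored in normal form, so that
   the kernel does not recompute them at each use. *)
Definition nbrs_table : seq (seq BSV) := Eval vm_compute in adj_lists.

Lemma nbrs_tableE : nbrs_table = adj_lists.
Proof. by vm_compute. Qed.

Definition nbrs (x : BSV) : seq BSV := nth [::] nbrs_table (vcode x).

Lemma mem_nbrs x y : (y \in nbrs x) = bs_adj x y.
Proof.
rewrite /nbrs nbrs_tableE (nth_map x) ?size_vertices ?vcode_lt //.
by rewrite nth_vertices mem_filter mem_vertices andbT.
Qed.

Definition tget (t : seq nat) (x : BSV) : nat := nth 0 t (vcode x).

Definition table (f : BSV -> BSV) : seq nat := [seq vcode (f x) | x <- vertices].

Definition tcomp (s t : seq nat) : seq nat := [seq nth 0 s i | i <- t].

Lemma tget_table f x : tget (table f) x = vcode (f x).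
Proof. by rewrite /tget (nth_map x) ?nth_vertices // size_vertices vcode_lt. Qed.

Lemma eq_table f g : f =1 g -> table f = table g.
Proof. by move=> fg; apply: eq_map => x; rewrite /= fg. Qed.

Lemma tcomp_table f g : tcomp (table f) (table g) = table (f \o g).
Proof. by rewrite /tcomp {2}/table -map_comp; apply: eq_map => x; exact: tget_table. Qed.

Definition aut_table (t : seq nat) : Prop :=
  exists2 phi : {perm BSV}, bs_aut phi & t = table phi.

Lemma aut_table_comp s t : aut_table s -> aut_table t -> aut_table (tcomp s t).
Proof.
move=> [phi autphi ->] [psi autpsi ->]; exists (psi * phi)%g; first exact: bs_autM.
by rewrite tcomp_table; apply: eq_table => x; rewrite permM.
Qed.

Lemma aut_table_homo f n :
  0 < n -> iter n f =1 id -> {homo f : x y / bs_adj x y} ->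
  aut_table (table f).
Proof.
case: n => // n _ fn fadj.
have injf : injective f by apply: (can_inj (g := iter n f)) => x; rewrite -iterSr fn.
exists (perm injf); last by apply: eq_table => x; rewrite permE.
by move=> x y; rewrite !permE; apply: inj_homo_mono.
Qed.

Section Saturation.

Variables (A : eqType) (op : A -> A -> A) (gens : seq A) (key : A -> nat) (eqb : rel A).

(* Elements are stored in buckets indexed by [key], to keep membership
   tests cheap.  Only soundness matters below, so [eqb] need not be a
   correct equality test. *)
Definition bucket_add (B : seq (seq A)) (a : A) : seq (seq A) :=
  set_nth [::] B (key a) (a :: nth [::] B (key a)).

Fixpoint add_new (B : seq (seq A)) (fresh cands : seq A) : seq (seq A) * seq A :=
  if cands is a :: cands' then
    if has (eqb a) (nth [::] B (key a)) then add_new B fresh cands'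
    else add_new (bucket_add B a) (a :: fresh) cands'
  else (B, fresh).

Fixpoint saturate (n : nat) (B : seq (seq A)) (frontier : seq A) : seq (seq A) :=
  if n is n'.+1 then
    let: (B', fresh) := add_new B [::] [seq op g a | g <- gens, a <- frontier] in
    if fresh is [::] then B' else saturate n' B' fresh
  else B.

Variable P : A -> Prop.
Hypothesis P_op : forall g a, g \in gens -> P a -> P (op g a).

Definition buckets_inv (B : seq (seq A)) := forall k, {in nth [::] B k, forall a, P a}.

Lemma bucket_add_inv B a : buckets_inv B -> P a -> buckets_inv (bucket_add B a).
Proof.
move=> PB Pa k b; rewrite nth_set_nth /=.
by case: ifP => _; [rewrite inE => /predU1P[->|/PB] | apply: PB].
Qed.

Lemma add_new_inv B fresh cands :
  buckets_inv B -> {in fresh, forall a, P a} -> {in cands, forall a, P a} ->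
  buckets_inv (add_new B fresh cands).1 /\ {in (add_new B fresh cands).2, forall a, P a}.
Proof.
elim: cands B fresh => [|a cands IHc] B fresh PB Pfresh Pc //=.
have Pa := Pc a (mem_head _ _).
have Pc' : {in cands, forall a, P a} by move=> b bc; apply: Pc; rewrite inE bc orbT.
case: ifP => _; first exact: IHc.
apply: IHc => //; first exact: bucket_add_inv.
by move=> b; rewrite inE => /predU1P[->|/Pfresh].
Qed.

Lemma saturate_inv n B frontier :
  buckets_inv B -> {in frontier, forall a, P a} -> buckets_inv (saturate n B frontier).
Proof.
elim: n B frontier => [|n IHn] B frontier PB Pfr //=.
have Pcands : {in [seq op g a | g <- gens, a <- frontier], forall a, P a}.
  by move=> _ /allpairsP[[g a] [/= gg afr ->]]; apply: P_op => //; apply: Pfr.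
have P0 : {in [::], forall a, P a} by [].
have := add_new_inv PB P0 Pcands.
case: add_new => B' [|b fresh] /= [PB' Pfresh] //.
exact: IHn.
Qed.

End Saturation.

Definition base_u : BSV := vdecode la.
Definition base_v : BSV := vdecode le.

Definition rotation (x : BSV) : BSV := vdecode (6 * (x.1 + 1) + x.2).

Definition doubling (x : BSV) : BSV :=
  vdecode (6 * (2 * x.1) + nth 0 [:: lc; ld; lb; la; lf; le] x.2).

(* An involution exchanging 17a and 17e; rotation and doubling alone only
   generate a subgroup of order 136. *)
Definition flip_table : seq nat :=
  [:: 4; 96; 10; 12; 0; 6; 5; 92; 26; 17; 2; 14; 3; 59; 11; 63; 57; 9; 51; 52;
      38; 62; 53; 50; 99; 100; 8; 86; 101; 98; 45; 95; 41; 87; 93; 39; 47; 56;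
      20; 35; 44; 32; 46; 48; 40; 30; 42; 36; 43; 97; 23; 18; 19; 22; 67; 94;
      37; 16; 91; 13; 70; 68; 21; 15; 71; 69; 66; 54; 61; 65; 60; 64; 72; 73;
      75; 74; 76; 77; 78; 90; 85; 89; 84; 88; 82; 80; 27; 33; 83; 81; 79; 58;
      7; 34; 55; 31; 1; 49; 29; 24; 25; 28].

Definition flip (x : BSV) : BSV := vdecode (tget flip_table x).

Definition homo_checkb (f : BSV -> BSV) (n : nat) : bool :=
  (0 < n) && all (fun x => (iter n f x == x) && all (fun y => f y \in nbrs (f x)) (nbrs x)) vertices.

Lemma homo_checkP f n : homo_checkb f n -> aut_table (table f).
Proof.
case/andP=> n_gt0 /allP fP; apply: (aut_table_homo n_gt0).
  by move=> x; have /andP[/eqP] := fP x (mem_vertices x).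
move=> x y; rewrite -!mem_nbrs => xy.
by have /andP[_ /allP] := fP x (mem_vertices x); apply.
Qed.

Lemma rotation_check : homo_checkb rotation 17. Proof. by vm_compute. Qed.
Lemma doubling_check : homo_checkb doubling 8. Proof. by vm_compute. Qed.
Lemma flip_check : homo_checkb flip 2. Proof. by vm_compute. Qed.

(* Unlike [eqseq], stops at the first difference under [vm_compute], which
   evaluates both arguments of [&&]. *)
Fixpoint eq_codes (s t : seq nat) : bool :=
  match s, t with
  | m :: s', n :: t' => if m == n then eq_codes s' t' else false
  | [::], [::] => true
  | _, _ => false
  end.

Definition aut_gens : seq (seq nat) := [:: table rotation; table doubling; table flip].

Lemma aut_gens_aut : {in aut_gens, forall t, aut_table t}.
Proof.
move=> t; rewrite !inE => /or3P[] /eqP->.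
- exact: homo_checkP rotation_check.
- exact: homo_checkP doubling_check.
- exact: homo_checkP flip_check.
Qed.

Definition id_table : seq nat := table id.

Lemma aut_table_id : aut_table id_table.
Proof. by exists 1%g; [exact: bs_aut1 | apply: eq_table => x; rewrite perm1]. Qed.

(* 20 rounds are more than enough: saturation is reached after 11.  Bucket
   [k] collects the automorphisms mapping [base_u] to the vertex of code [k]. *)
Definition aut_buckets : seq (seq (seq nat)) :=
  saturate tcomp aut_gens (head 0) eq_codes 20 (bucket_add (head 0) [::] id_table) [:: id_table].

Lemma aut_buckets_inv : buckets_inv aut_table aut_buckets.
Proof.
apply: saturate_inv.
- by move=> g a /aut_gens_aut; apply: aut_table_comp.
- by apply: bucket_add_inv aut_table_id => k a; rewrite nth_nil.
- by move=> a; rewrite inE => /eqP->; exact: aut_table_id.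
Qed.

Lemma find_leq_iota d k m : k <= d < k + m -> find (leq d) (iota k m) = d - k.
Proof.
elim: m k => [|m IHm] k /andP[kd dkm]; first by rewrite addn0 ltnNge kd in dkm.
rewrite /=; case: leqP => [dk|lt_kd]; first by apply/esym/eqP; rewrite subn_eq0.
by rewrite IHm ?subnSK // lt_kd addSnnS.
Qed.

Definition dist_certb (x0 : BSV) (D : BSV -> nat) : bool :=
  all (fun z => [&& (D z == 0) == (z == x0), D z < 102,
                    all (fun w => D w <= (D z).+1) (nbrs z)
                  & (0 < D z) ==> has (fun w => D w == (D z).-1) (nbrs z)]) vertices.

Lemma dist_certP x0 D : dist_certb x0 D -> forall z, bs_dist x0 z = D z.
Proof.
move=> /allP cert; have {}cert z := cert z (mem_vertices z).
have reachE n z : bs_reach n x0 z = (D z <= n).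
  elim: n z => [|n IHn] z /=.
    by rewrite leqn0 eq_sym; have /and4P[/eqP -> _ _ _] := cert z.
  rewrite IHn; apply/idP/idP.
    case/orP=> [|/existsP[w /andP[]]]; first exact: leqW.
    rewrite IHn -mem_nbrs => Dw wz.
    by have /and4P[_ _ /allP/(_ z wz) Dz _] := cert w; apply: leq_trans Dz _.
  rewrite leq_eqVlt ltnS => /orP[/eqP Dz|->//]; apply/orP; right.
  have /and4P[_ _ _ /implyP] := cert z; rewrite Dz => /(_ isT)/hasP[w zw /eqP Dw].
  by apply/existsP; exists w; rewrite IHn Dw bs_adjC -mem_nbrs zw andbT.
move=> z; rewrite /bs_dist (eq_find (a2 := leq (D z))) => [|n]; last exact: reachE.
have /and4P[_ Dz _ _] := cert z.
by rewrite card_prod !card_ord find_leq_iota ?subn0.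
Qed.

(* Bellman-Ford relaxation; its output is only trusted through
   [dist_certP]. *)
Definition relax (d : seq nat) : seq nat :=
  [seq foldr minn (tget d x) [seq (tget d y).+1 | y <- nbrs x] | x <- vertices].

Definition dist_table (x0 : BSV) : seq nat :=
  iter 102 relax [seq (x != x0) * 102 | x <- vertices].

Definition dist_u : seq nat := Eval vm_compute in dist_table base_u.
Definition dist_v : seq nat := Eval vm_compute in dist_table base_v.

Lemma dist_u_cert : dist_certb base_u (tget dist_u). Proof. by vm_compute. Qed.
Lemma dist_v_cert : dist_certb base_v (tget dist_v). Proof. by vm_compute. Qed.

Definition profile (xs : seq BSV) : seq (nat * nat) :=
  [seq (tget dist_u x, tget dist_v x) | x <- xs].

Lemma profileE xs : profile xs = [seq (bs_dist base_u x, bs_dist base_v x) | x <- xs].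
Proof.
by apply: eq_map => x; rewrite (dist_certP dist_u_cert) (dist_certP dist_v_cert).
Qed.

Lemma profile_aut g u v xs :
  bs_aut g -> g u = base_u -> g v = base_v ->
  profile (map g xs) = zip (map (bs_dist u) xs) (map (bs_dist v) xs).
Proof.
move=> autg gu gv; rewrite profileE zip_map -map_comp; apply: eq_map => x.
by rewrite /= -gu -gv !bs_dist_aut.
Qed.

Section Checks.

Variable B : seq (seq (seq nat)).
Hypothesis B_aut : buckets_inv aut_table B.

Definition arc_checkb : bool :=
  all (fun x => all (fun y =>
         has (fun t => (tget t base_u == vcode x) && (tget t base_v == vcode y))
             (nth [::] B (vcode x)))
       (nbrs x)) vertices.

Lemma arc_checkP u v : arc_checkb -> bs_adj u v ->
  exists2 g : {perm BSV}, bs_aut g & g u = base_u /\ g v = base_v.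
Proof.
move=> /allP arc_ok; rewrite -mem_nbrs => uv.
have /allP/(_ v uv)/hasP[t /B_aut[g autg ->]] := arc_ok u (mem_vertices u).
rewrite !tget_table => /andP[/eqP/vcode_inj gu /eqP/vcode_inj gv].
by exists g^-1%g; [exact: bs_autV | rewrite -gu -gv !permK].
Qed.

Definition base_stab : seq (seq nat) :=
  [seq t <- nth [::] B (vcode base_u) |
     (tget t base_u == vcode base_u) && (tget t base_v == vcode base_v)].

Definition orbit_checkb (cs : seq (seq BSV)) : bool :=
  all (fun xs => all (fun ys => has (fun t => map (tget t) xs == map vcode ys) base_stab)
                    [seq ys <- cs | profile ys == profile xs]) cs.

Lemma orbit_checkP cs : orbit_checkb cs ->
  {in cs &, forall xs ys, profile xs = profile ys ->
     exists2 s : {perm BSV}, bs_aut s & [/\ s base_u = base_u, s base_v = base_v & map s xs = ys]}.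
Proof.
move=> /allP cs_ok xs ys xs_cs ys_cs pxy.
have /allP/(_ ys) := cs_ok xs xs_cs; rewrite mem_filter pxy eqxx ys_cs => /(_ isT)/hasP[t].
rewrite mem_filter => /andP[fix_base /B_aut[s auts tE]] /eqP sxs; subst t.
move: fix_base; rewrite !tget_table => /andP[/eqP/vcode_inj su /eqP/vcode_inj sv].
exists s => //; split => //.
apply: (inj_map vcode_inj); rewrite -sxs -map_comp; apply: eq_map => x.
by rewrite /= tget_table.
Qed.

End Checks.

Definition singletons : seq (seq BSV) := [seq [:: x] | x <- vertices].
Definition arcs : seq (seq BSV) := [seq [:: x; y] | x <- vertices, y <- nbrs x].

Lemma mem_singletons x : [:: x] \in singletons.
Proof. by rewrite map_f ?mem_vertices. Qed.

Lemma mem_arcs x y : ([:: x; y] \in arcs) = bs_adj x y.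
Proof.
apply/allpairsPdep/idP => [[a [b [_ ab [-> ->]]]]|xy]; first by rewrite -mem_nbrs.
by exists x, y; rewrite mem_vertices mem_nbrs.
Qed.

Lemma singletons_aut g ys : ys \in singletons -> map g ys \in singletons.
Proof. by case/mapP=> x _ ->; apply: mem_singletons. Qed.

Lemma arcs_aut g ys : bs_aut g -> ys \in arcs -> map g ys \in arcs.
Proof. by move=> autg /allpairsPdep[x [y [_ xy ->]]]; rewrite mem_arcs autg -mem_nbrs. Qed.

(* A single check, so that [aut_buckets] is computed only once. *)
Definition aut_checkb (B : seq (seq (seq nat))) : bool :=
  [&& arc_checkb B, orbit_checkb B singletons & orbit_checkb B arcs].

Lemma aut_check : aut_checkb aut_buckets. Proof. by vm_compute. Qed.

Lemma arc_transitive u v : bs_adj u v ->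
  exists2 g : {perm BSV}, bs_aut g & g u = base_u /\ g v = base_v.
Proof. by case/and3P: aut_check => arc_ok _ _; exact: (arc_checkP aut_buckets_inv arc_ok). Qed.

Lemma singletons_orbits : orbit_checkb aut_buckets singletons.
Proof. by case/and3P: aut_check. Qed.

Lemma arcs_orbits : orbit_checkb aut_buckets arcs.
Proof. by case/and3P: aut_check. Qed.

Lemma aut_transport cs u v xs u' v' xs' :
  orbit_checkb aut_buckets cs -> (forall g ys, bs_aut g -> ys \in cs -> map g ys \in cs) ->
  xs \in cs -> xs' \in cs -> bs_adj u v -> bs_adj u' v' ->
  map (bs_dist u) xs = map (bs_dist u') xs' ->
  map (bs_dist v) xs = map (bs_dist v') xs' ->
  exists phi : {perm BSV}, [/\ bs_aut phi, phi u = u', phi v = v' & map phi xs = xs'].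
Proof.
move=> cs_ok cs_aut xs_cs xs'_cs /arc_transitive[g autg [gu gv]].
move=> /arc_transitive[g' autg' [gu' gv']] du dv.
have pE : profile (map g xs) = profile (map g' xs').
  by rewrite (profile_aut _ autg gu gv) (profile_aut _ autg' gu' gv') du dv.
have [s auts [su sv sxs]] := orbit_checkP aut_buckets_inv cs_ok
  (cs_aut _ _ autg xs_cs) (cs_aut _ _ autg' xs'_cs) pE.
exists (g * s * g'^-1)%g; split.
- exact: bs_autM (bs_autM autg auts) (bs_autV autg').
- by rewrite !permM gu su -gu' permK.
- by rewrite !permM gv sv -gv' permK.
apply: (inj_map (@perm_inj _ g')); rewrite -sxs -!map_comp; apply: eq_map => x.
by rewrite /= !permM permKV.
Qed.

Theorem lemma2p4 :
  (forall u v x u' v' x' : BSV,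
      bs_adj u v -> bs_adj u' v' ->
      bs_dist u x = bs_dist u' x' -> bs_dist v x = bs_dist v' x' ->
      exists phi : {perm BSV},
        [/\ bs_aut phi, phi u = u', phi v = v' & phi x = x'])
  /\
  (forall u v x y u' v' x' y' : BSV,
      bs_adj u v -> bs_adj x y -> bs_adj u' v' -> bs_adj x' y' ->
      bs_dist u x = bs_dist u' x' -> bs_dist u y = bs_dist u' y' ->
      bs_dist v x = bs_dist v' x' -> bs_dist v y = bs_dist v' y' ->
      exists phi : {perm BSV},
        [/\ bs_aut phi, phi u = u', phi v = v', phi x = x' & phi y = y']).
Proof.
split=> [u v x u' v' x' uv u'v' dux dvx | u v x y u' v' x' y' uv xy u'v' x'y' dux duy dvx dvy].
  have [] := aut_transport singletons_orbits (fun g ys _ => @singletons_aut g ys)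
    (mem_singletons x) (mem_singletons x') uv u'v'.
  - by rewrite /= dux.
  - by rewrite /= dvx.
  by move=> phi [autphi phiu phiv [phix]]; exists phi.
have xy_arc : [:: x; y] \in arcs by rewrite mem_arcs.
have x'y'_arc : [:: x'; y'] \in arcs by rewrite mem_arcs.
have [] := aut_transport arcs_orbits arcs_aut xy_arc x'y'_arc uv u'v'.
- by rewrite /= dux duy.
- by rewrite /= dvx dvy.
by move=> phi [autphi phiu phiv [phix phiy]]; exists phi.
Qed.
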